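(* Let $\mathbb{A}$ be a countable homogeneous structure, $\mathbb{F}$ a field, $d\ge1$, and $\mathscr{B}$ a family of finite substructures of $\mathbb{A}$ such that every finite substructure of $\mathbb{A}$ is a substructure of some $\mathbb{B}\in\mathscr{B}$. Then the length of $\operatorname{Lin}_{\mathbb{F}}\mathbb{A}^d$ (with respect to $\operatorname{Aut}(\mathbb{A})$) is at most $\sup_{\mathbb{B}\in\mathscr{B}}$ of the length of $\operatorname{Lin}_{\mathbb{F}}\mathbb{B}^d$ (with respect to $\operatorname{Aut}(\mathbb{B})$).
   Context: Homogeneous: every isomorphism between finite substructures extends to an automorphism. For a group $G$ acting on a set $X$, $\operatorname{Lin}_{\mathbb{F}}X$ is the space of finite formal linear combinations of elements of $X$ with the induced linear $G$-action; the length of $\operatorname{Lin}_{\mathbb{F}}X$ with respect to $G$ is the supremum of $n$ such that there is a chain $V_0\subsetneq\dots\subsetneq V_n$ of $G$-invariant subspaces. Here $G=\operatorname{Aut}(\mathbb{A})$ acts on $\mathbb{A}^d$ and $\operatorname{Aut}(\mathbb{B})$ on $\mathbb{B}^d$ componentwise. *)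

From HB Require Import structures.
From mathcomp Require Import all_boot all_algebra.
From mathcomp Require Import boolp classical_sets.
From Stdlib Require List.
Set Implicit Arguments.
Unset Strict Implicit.
Unset Printing Implicit Defensive.
Import GRing.Theory.
Local Open Scope ring_scope.

Record signature := Signature { sym : Type; arity : sym -> nat }.

Definition interp (L : signature) (T : Type) :=
  forall s : sym L, ('I_(arity s) -> T) -> Prop.

Definition induced (L : signature) (T : Type) (I : interp L T) (P : set T)
  : interp L {x : T | P x} :=
  fun s t => I s (fun i => proj1_sig (t i)).
Arguments induced {L T} I P _ _.

Definition is_iso (L : signature) (T1 T2 : Type) (I1 : interp L T1)
  (I2 : interp L T2) (f : T1 -> T2) (g : T2 -> T1) : Prop :=
  cancel f g /\ cancel g f /\
  forall s (t : 'I_(arity s) -> T1), I2 s (fun i => f (t i)) <-> I1 s t.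

Definition is_aut (L : signature) (T : Type) (I : interp L T) (g h : T -> T) :=
  is_iso I I g h.

Definition finite_subset (T : Type) (P : set T) : Prop :=
  exists s : seq T, forall x, P x -> List.In x s.

Definition countable_type (T : Type) : Prop :=
  exists f : T -> nat, injective f.

Definition homogeneous (L : signature) (T : Type) (I : interp L T) : Prop :=
  forall (S1 S2 : set T), finite_subset S1 -> finite_subset S2 ->
  forall (f : {x | S1 x} -> {x | S2 x}) (g : {x | S2 x} -> {x | S1 x}),
    is_iso (induced I S1) (induced I S2) f g ->
    exists a b : T -> T, is_aut I a b /\
      forall x : {x | S1 x}, a (proj1_sig x) = proj1_sig (f x).

(** Lin_F X : finite formal linear combinations = finitely supported
    coefficient functions X -> F. *)
Definition finsupp (X : Type) (F : fieldType) (v : X -> F) : Prop :=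
  exists s : seq X, forall x, v x != 0 -> List.In x s.

Definition lin_subspace (X : Type) (F : fieldType) (W : set (X -> F)) : Prop :=
  [/\ forall v, W v -> finsupp v,
      W (fun _ => 0) &
      forall (a : F) u v, W u -> W v -> W (fun x => a * u x + v x)].

(** Invariance under the linear action of Aut(T,I) on Lin_F (T^d), the
    automorphism g (inverse h) acting componentwise on T^d = 'I_d -> T:
    (g . v)(t) = v (g^-1 o t). *)
Definition aut_invariant (L : signature) (T : Type) (I : interp L T)
  (F : fieldType) (d : nat) (W : set (('I_d -> T) -> F)) : Prop :=
  forall g h, is_aut I g h ->
    forall v, W v -> W (fun t => v (fun i => h (t i))).

Definition proper_sub (X : Type) (V W : set X) : Prop :=
  (forall x, V x -> W x) /\ exists x, W x /\ ~ V x.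

Definition has_chain (L : signature) (T : Type) (I : interp L T)
  (F : fieldType) (d n : nat) : Prop :=
  exists V : nat -> set (('I_d -> T) -> F),
    (forall i, (i <= n)%N -> lin_subspace (V i) /\ aut_invariant I (V i)) /\
    (forall i, (i < n)%N -> proper_sub (V i) (V i.+1)).

(** Extended naturals: None = infinity. *)
Definition enat := option nat.

Definition enat_le (a b : enat) : Prop :=
  match a, b with
  | _, None => True
  | None, Some _ => False
  | Some m, Some n => (m <= n)%N
  end.

Definition is_esup (S : set enat) (e : enat) : Prop :=
  (forall x, S x -> enat_le x e) /\
  (forall u, (forall x, S x -> enat_le x u) -> enat_le e u).

(** Supremum in the extended naturals (exists and is unique). *)
Definition esup (S : set enat) : enat := xget None [set e | is_esup S e].

Definition lin_pow_length (L : signature) (T : Type) (I : interp L T)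
  (F : fieldType) (d : nat) : enat :=
  esup (fun e => exists n, has_chain I F d n /\ e = Some n).

(* A chain V_0 < ... < V_n of invariant subspaces of Lin A^d is witnessed by
   finitely many vectors w_i in V_(i+1) \ V_i, whose supports involve only a
   finite set S of points of A.  Take B in the family containing S and pull
   each V_i back to Lin B^d along extension by zero.  The pullbacks are
   subspaces, still strictly increasing because every w_i lives on B^d, and
   Aut(B)-invariant because, by homogeneity, every automorphism of the finite
   substructure B extends to an automorphism of A.  Hence every chain length
   for A is a chain length for some B. *)
From Pilot Require Import Defs.
From HB Require Import structures.
From mathcomp Require Import all_boot all_algebra.
From mathcomp Require Import boolp classical_sets.
Set Implicit Arguments.
Unset Strict Implicit.
Import GRing.Theory.
Local Open Scope ring_scope.

Lemma enat_le_trans a b c : enat_le a b -> enat_le b c -> enat_le a c.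
Proof. by case: a => [a|]; case: b => [b|]; case: c => [c|] //=; apply: leq_trans. Qed.

Lemma is_esup_bounded (S : set enat) m :
  (forall x, S x -> enat_le x (Some m)) -> exists e, is_esup S e.
Proof.
elim: m => [|m IH] Sm.
  by exists (Some 0%N); split => // -[].
have [Sm1|nSm1] := pselect (S (Some m.+1)).
  by exists (Some m.+1); split => // u; apply.
apply: IH => -[k|] Sk; have := Sm _ Sk => //=.
by rewrite leq_eqVlt => /orP[/eqP Ek|//]; rewrite Ek in Sk.
Qed.

Lemma esupP (S : set enat) : is_esup S (esup S).
Proof.
apply: (@xgetPex _ None [set e | is_esup S e]).
have [[m Sm]|unbounded] := pselect (exists m, forall x, S x -> enat_le x (Some m)).
  exact: is_esup_bounded Sm.
exists None; split => [[]//|[m|//] Sm].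
by case: unbounded; exists m.
Qed.

Lemma esup_ub (S : set enat) x : S x -> enat_le x (esup S).
Proof. exact: (esupP S).1. Qed.

Lemma esup_least (S : set enat) u :
  (forall x, S x -> enat_le x u) -> enat_le (esup S) u.
Proof. exact: (esupP S).2. Qed.

Lemma In_enum (T : finType) (x : T) : List.In x (enum T).
Proof.
have : x \in enum T by rewrite mem_enum.
elim: (enum T) => //= y s IH.
by rewrite in_cons => /orP[/eqP ->|/IH]; [left|right].
Qed.

Lemma chain_witnesses_finsupp (X : Type) (F : fieldType)
    (V : nat -> set (X -> F)) n :
  (forall i, (i <= n)%N -> lin_subspace (V i)) ->
  (forall i, (i < n)%N -> Defs.proper_sub (V i) (V i.+1)) ->
  exists s : seq X, forall i, (i < n)%N ->
    exists w, [/\ V i.+1 w, ~ V i w & forall x, w x != 0 -> List.In x s].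
Proof.
move=> Vlin Vlt.
suff: forall k, (k <= n)%N -> exists s : seq X, forall i, (i < k)%N ->
  exists w, [/\ V i.+1 w, ~ V i w & forall x, w x != 0 -> List.In x s].
  by apply; apply: leqnn.
elim=> [|k IH] ltkn; first by exists [::].
have [s Hs] := IH (ltnW ltkn).
have [_ [w [Vw nVw]]] := Vlt k ltkn.
have [Vsupp _ _] := Vlin k.+1 ltkn; have [s' suppw] := Vsupp w Vw.
exists (s ++ s') => i; rewrite ltnS leq_eqVlt => /orP[/eqP ->|ltik].
  by exists w; split=> // x /suppw sx; apply: List.in_or_app; right.
have [w' [Vw' nVw' suppw']] := Hs i ltik.
by exists w'; split=> // x /suppw' sx; apply: List.in_or_app; left.
Qed.

Section ExtensionByZero.

Variables (A : Type) (B : set A) (F : fieldType) (d : nat).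

Definition zero_ext (v : ('I_d -> {x | B x}) -> F) : ('I_d -> A) -> F :=
  fun t => match pselect (forall i, B (t i)) with
  | left Bt => v (fun i => exist _ (t i) (Bt i))
  | right _ => 0
  end.

Lemma exist_sval (y : {x | B x}) (By : B (sval y)) : exist _ (sval y) By = y.
Proof. by case: y By => x Bx By; congr exist; apply: Prop_irrelevance. Qed.

Lemma zero_ext_in v (t : 'I_d -> A) (Bt : forall i, B (t i)) :
  zero_ext v t = v (fun i => exist _ (t i) (Bt i)).
Proof.
rewrite /zero_ext; case: pselect => [Bt'|//]; congr v; apply: funext => i.
by congr exist; apply: Prop_irrelevance.
Qed.

Lemma zero_ext_out v (t : 'I_d -> A) :
  ~ (forall i, B (t i)) -> zero_ext v t = 0.
Proof. by rewrite /zero_ext; case: pselect. Qed.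

Lemma zero_ext_sval v (t : 'I_d -> {x | B x}) :
  zero_ext v (fun i => sval (t i)) = v t.
Proof.
by rewrite (zero_ext_in _ (fun i => svalP (t i))); congr v; apply: funext => i;
  rewrite exist_sval.
Qed.

Lemma zero_extK (w : ('I_d -> A) -> F) :
  (forall t, w t != 0 -> forall i, B (t i)) ->
  zero_ext (fun t => w (fun i => sval (t i))) = w.
Proof.
move=> suppw; apply: funext => t.
have [Bt|nBt] := pselect (forall i, B (t i)); first by rewrite zero_ext_in.
by rewrite zero_ext_out //; case: (eqVneq (w t) 0) => [//|/suppw/nBt].
Qed.

Definition pullback (W : set (('I_d -> A) -> F)) : set (('I_d -> {x | B x}) -> F) :=
  fun v => W (zero_ext v).

Lemma lin_subspace_pullback W : lin_subspace W -> lin_subspace (pullback W).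
Proof.
move=> [Wsupp W0 WD]; split.
- move=> v /Wsupp [s suppv].
  pose lift (t : 'I_d -> A) : seq ('I_d -> {x | B x}) :=
    if pselect (forall i, B (t i)) is left Bt
    then [:: fun i => exist _ (t i) (Bt i)] else [::].
  exists (List.flat_map lift s) => t vt.
  apply/List.in_flat_map; exists (fun i => sval (t i)); split.
    by apply: suppv; rewrite zero_ext_sval.
  rewrite /lift; case: pselect => [Bt|nBt]; last by case: nBt => i; apply: svalP.
  by left; apply: funext => i; rewrite exist_sval.
- rewrite /pullback; suff -> : zero_ext (fun _ => 0) = (fun _ => 0) by [].
  by apply: funext => t; rewrite /zero_ext; case: pselect.
- move=> a u v Wu Wv; rewrite /pullback.
  suff -> : zero_ext (fun t => a * u t + v t)
          = (fun t => a * zero_ext u t + zero_ext v t) by apply: WD.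
  by apply: funext => t; rewrite /zero_ext; case: pselect; rewrite ?mulr0 ?addr0.
Qed.

Lemma proper_sub_pullback V W (w : ('I_d -> A) -> F) :
  (forall v, V v -> W v) -> W w -> ~ V w ->
  (forall t, w t != 0 -> forall i, B (t i)) ->
  Defs.proper_sub (pullback V) (pullback W).
Proof.
move=> VW Ww nVw suppw; split=> [v /VW //|].
by exists (fun t => w (fun i => sval (t i))); rewrite /pullback zero_extK.
Qed.

End ExtensionByZero.

Section HomogeneousRestriction.

Variables (L : signature) (A : Type) (IA : interp L A).
Hypothesis homA : homogeneous IA.

(* The extension [a] of an automorphism [g] of the finite substructure on [B]
   maps [B] onto [B], so its inverse [b] agrees with [g]'s inverse [h]. *)
Lemma homogeneous_aut_extend (B : set A) g h :
  finite_subset B -> is_aut (induced IA B) g h ->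
  exists a b, [/\ is_aut IA a b,
    forall x : {x | B x}, b (sval x) = sval (h x) &
    forall y, B (b y) -> B y].
Proof.
move=> finB autg.
have [a [b [autA ext]]] := homA finB finB autg.
have [hK [gK _]] := autg; have [bK [aK _]] := autA.
exists a, b; split=> // [x|y Bby].
  by rewrite -[in LHS](gK x) -ext bK.
by rewrite -(aK y) -[b y]/(sval (exist B (b y) Bby)) ext; apply: svalP.
Qed.

Lemma aut_invariant_pullback (F : fieldType) (d : nat) (B : set A) W :
  finite_subset B -> aut_invariant IA W ->
  aut_invariant (induced IA B) (@pullback A B F d W).
Proof.
move=> finB Winv g h autg v Wv; rewrite /pullback.
have [a [b [autA bh Bb]]] := homogeneous_aut_extend finB autg.
suff -> : zero_ext (fun t => v (fun i => h (t i)))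
        = (fun t => zero_ext v (fun i => b (t i))) by apply: Winv autA _ Wv.
apply: funext => t; have [Bt|nBt] := pselect (forall i, B (t i)).
  rewrite zero_ext_in.
  have -> : (fun i => b (t i)) = (fun i => sval (h (exist _ (t i) (Bt i)))).
    by apply: funext => i; rewrite -bh.
  by rewrite zero_ext_sval.
by rewrite !zero_ext_out // => Bbt; apply: nBt => i; apply: Bb.
Qed.

Lemma has_chain_induced (F : fieldType) (d n : nat) (Bs : set (set A)) :
  (forall B, Bs B -> finite_subset B) ->
  (forall S : set A, finite_subset S -> exists2 B, Bs B & forall x, S x -> B x) ->
  has_chain IA F d n -> exists2 B, Bs B & has_chain (induced IA B) F d n.
Proof.
move=> finBs cover [V [Vok Vlt]].
have [s witness] :=
  chain_witnesses_finsupp (fun i lein => (Vok i lein).1) Vlt.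
pose S : set A := fun x => exists t, List.In t s /\ exists j, x = t j.
have finS : finite_subset S.
  exists (List.flat_map (fun t => map t (enum 'I_d)) s).
  move=> x [t [st [j ->]]]; apply/List.in_flat_map; exists t; split=> //.
  exact/List.in_map/In_enum.
have [B BsB SB] := cover S finS.
exists B => //; exists (fun i => @pullback A B F d (V i)); split.
  move=> i lein; have [Vlin Vinv] := Vok i lein; split.
    exact: lin_subspace_pullback.
  exact: aut_invariant_pullback (finBs B BsB) Vinv.
move=> i ltin; have [w [Vw nVw suppw]] := witness i ltin.
apply: (proper_sub_pullback (Vlt i ltin).1 Vw nVw) => t /suppw st j.
by apply: SB; exists t; split=> //; exists j.
Qed.

End HomogeneousRestriction.

Theorem mainTheorem5 (L : signature) (A : Type) (IA : interp L A)
  (F : fieldType) (d : nat) (Bs : set (set A)) :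
  countable_type A ->
  homogeneous IA ->
  (0 < d)%N ->
  (forall B, Bs B -> finite_subset B) ->
  (forall S : set A, finite_subset S ->
     exists2 B, Bs B & forall x, S x -> B x) ->
  enat_le (lin_pow_length IA F d)
    (esup (fun e => exists2 B, Bs B & e = lin_pow_length (induced IA B) F d)).
Proof.
move=> _ homA _ finBs cover.
apply: esup_least => _ [n [chainA ->]].
have [B BsB chainB] := has_chain_induced homA finBs cover chainA.
apply: enat_le_trans (esup_ub (ex_intro2 _ _ B BsB erefl)).
exact: esup_ub (ex_intro _ n (conj chainB erefl)).
Qed.
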